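(* In the setting of the structural VAR $A(L)w_t = \epsilon_t$, $A(L)=A_0+A_1L+\cdots+A_pL^p$ with $A_0$ nonsingular, partition $w_t' = (y_t', x_t')$ with $y_t$ of dimension $G$ and $x_t$ of dimension $K$, $G+K=m$, and partition conformably $A(L) = \begin{bmatrix} A_{11}(L) & A_{12}(L)\\ A_{21}(L) & A_{22}(L)\end{bmatrix}$ and $\epsilon_t' = (\epsilon_{1t}', \epsilon_{2t}')$. Suppose the prior restrictions $A_{21}(L)\equiv 0$ and $E(\epsilon_{1t}\epsilon_{2t}')=0$ hold, and that for some $g\le G$ the $g$-th row $a_g'$ of $A=[A_0,\dots,A_p]$ satisfies $a_g'\Phi_g = 0'$ for a known $(p+1)m\times R_g$ matrix $\Phi_g$. Then the $g$-th equation is identified if and only if $$\operatorname{rank}\big[(A_{11}\ \ A_{12})\Phi_g\big] = G-1,$$ where $(A_{11}\ \ A_{12})$ denotes the $G\times(p+1)m$ matrix consisting of the first $G$ rows of $A=[A_0,A_1,\dots,A_p]$.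
   Context: Two structures $A$ and $FA$ (with $F$ a nonsingular $m\times m$ matrix and errors $F\epsilon_t$) generate the same reduced form and are observationally equivalent. A nonsingular $F$ is admissible if $FA$ and $F\epsilon_t$ satisfy the same prior restrictions as $A$ and $\epsilon_t$ (here including $A_{21}(L)\equiv 0$, the zero block covariance, and for each equation its own linear restrictions). The $g$-th equation is identified if and only if for every admissible $F$ the $g$-th row of $F$ has the form $(0,\dots,0,f_{gg},0,\dots,0)$ with $f_{gg}\ne 0$. *)

From HB Require Import structures.
From mathcomp Require Import all_boot all_order all_algebra.
From mathcomp Require Import zify.
Set Implicit Arguments. Unset Strict Implicit. Unset Printing Implicit Defensive.
Import Order.TTheory GRing.Theory Num.Theory.
Local Open Scope ring_scope.

(* Column index of entry (., j) of the lag-i block A_i inside A = [A_0,...,A_p]. *)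
Lemma lagcol_subproof (p m : nat) (i : 'I_p.+1) (j : 'I_m) : (i * m + j < p.+1 * m)%N.
Proof. have := ltn_ord i; have := ltn_ord j; nia. Qed.

Definition lagcol (p m : nat) (i : 'I_p.+1) (j : 'I_m) : 'I_(p.+1 * m) :=
  Ordinal (lagcol_subproof i j).

Definition lag_mx (R : Type) (G K p : nat) (A : 'M[R]_(G + K, p.+1 * (G + K)))
  (i : 'I_p.+1) : 'M[R]_(G + K) :=
  \matrix_(r, c) A r (lagcol i c).

(* Prior restriction A_21(L) == 0 : lower-left K x G block of every A_i vanishes. *)
Definition block_restr (R : fieldType) (G K p : nat)
  (A : 'M[R]_(G + K, p.+1 * (G + K))) : Prop :=
  forall i : 'I_p.+1, dlsubmx (lag_mx A i) = 0.

(* Prior restriction E(eps_1t eps_2t') = 0 on the covariance matrix. *)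
Definition cov_restr (R : fieldType) (G K : nat) (Sigma : 'M[R]_(G + K)) : Prop :=
  ursubmx Sigma = 0.

Definition eq_restr (R : fieldType) (G K p : nat) (Rdim : 'I_(G + K) -> nat)
  (Phi : forall h : 'I_(G + K), 'M[R]_(p.+1 * (G + K), Rdim h))
  (A : 'M[R]_(G + K, p.+1 * (G + K))) : Prop :=
  forall h : 'I_(G + K), row h A *m Phi h = 0.

(* F admissible: FA and F eps_t (covariance F Sigma F') satisfy the same priors. *)
Definition admissible (R : fieldType) (G K p : nat) (Rdim : 'I_(G + K) -> nat)
  (Phi : forall h : 'I_(G + K), 'M[R]_(p.+1 * (G + K), Rdim h))
  (A : 'M[R]_(G + K, p.+1 * (G + K))) (Sigma : 'M[R]_(G + K))
  (F : 'M[R]_(G + K)) : Prop :=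
  [/\ F \in unitmx,
      block_restr (F *m A),
      cov_restr (F *m Sigma *m F^T)
    & eq_restr Phi (F *m A)].

Definition identified (R : fieldType) (G K p : nat) (Rdim : 'I_(G + K) -> nat)
  (Phi : forall h : 'I_(G + K), 'M[R]_(p.+1 * (G + K), Rdim h))
  (A : 'M[R]_(G + K, p.+1 * (G + K))) (Sigma : 'M[R]_(G + K))
  (g : 'I_(G + K)) : Prop :=
  forall F : 'M[R]_(G + K), admissible Phi A Sigma F ->
    (forall j : 'I_(G + K), j != g -> F g j = 0) /\ F g g != 0.

Definition pos_def (R : realFieldType) (n : nat) (S : 'M[R]_n) : Prop :=
  S^T = S /\ forall x : 'rV[R]_n, x != 0 -> 0 < (x *m S *m x^T) 0 0.

(* An admissible F must be block diagonal: the lower-left block vanishes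
   because F A_0 keeps the block-triangular shape of A_0 (whose upper-left
   block is invertible), and then the covariance restriction reduces to
   F_12 Sigma_22 F_22' = 0 with Sigma_22 positive definite and F_22
   invertible.  Hence row g of F is (f, 0) with f in the left kernel of
   M = (A_11 A_12) Phi_g, which always contains e_g.  So identification
   means that this kernel is the line through e_g, i.e. rank M = G - 1;
   conversely any other kernel vector v with v_g = 0 gives the admissible
   shear diag(1 + e_g' v, 1), which mixes equation g with others. *)
From HB Require Import structures.
From mathcomp Require Import all_boot all_order all_algebra.
From mathcomp Require Import zify.
Set Implicit Arguments. Unset Strict Implicit. Unset Printing Implicit Defensive.
Import Order.TTheory GRing.Theory Num.Theory.
Local Open Scope ring_scope.

Section BlockProducts.
Variable R : pzRingType.

Lemma dlsubmx_mul m1 m2 n1 n2 p1 p2 (A : 'M[R]_(m1 + m2, n1 + n2))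
    (B : 'M[R]_(n1 + n2, p1 + p2)) :
  dlsubmx (A *m B) = dlsubmx A *m ulsubmx B + drsubmx A *m dlsubmx B.
Proof. by rewrite -{1}[A]submxK -{1}[B]submxK mulmx_block block_mxKdl. Qed.

Lemma ursubmx_mul m1 m2 n1 n2 p1 p2 (A : 'M[R]_(m1 + m2, n1 + n2))
    (B : 'M[R]_(n1 + n2, p1 + p2)) :
  ursubmx (A *m B) = ulsubmx A *m ursubmx B + ursubmx A *m drsubmx B.
Proof. by rewrite -{1}[A]submxK -{1}[B]submxK mulmx_block block_mxKur. Qed.

Lemma ursubmx_mul_tr m n (F S : 'M[R]_(m + n)) :
  dlsubmx F = 0 -> ursubmx S = 0 ->
  ursubmx (F *m S *m F^T) = ursubmx F *m drsubmx S *m (drsubmx F)^T.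
Proof.
move=> F21 S12; rewrite ursubmx_mul -trmx_dlsub F21 trmx0 mulmx0 add0r.
by rewrite ursubmx_mul S12 mulmx0 add0r trmx_drsub.
Qed.

Lemma lag_mx_mul G K p (F : 'M[R]_(G + K)) (A : 'M[R]_(G + K, p.+1 * (G + K))) i :
  lag_mx (F *m A) i = F *m lag_mx A i.
Proof. by apply/matrixP=> r c; rewrite !mxE; apply: eq_bigr => k _; rewrite !mxE. Qed.

End BlockProducts.

Section UnitMatrices.
Variable R : comUnitRingType.

Lemma unitmx_dlsubmx0 m n (A : 'M[R]_(m + n)) : dlsubmx A = 0 ->
  (A \in unitmx) = (ulsubmx A \in unitmx) && (drsubmx A \in unitmx).
Proof. by move=> A21; rewrite -{1}[A]submxK A21 !unitmxE det_ublock unitrM. Qed.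

Lemma unitmx_1_add n (N : 'M[R]_n) : N *m N = 0 -> 1%:M + N \in unitmx.
Proof.
move=> NN; suff /mulmx1_unit[] : (1%:M + N) *m (1%:M - N) = 1%:M by [].
by rewrite mulmxDl mul1mx mulmxDr mulmxN NN subr0 mulmx1 subrK.
Qed.

Lemma unitmx_row_neq0 n (F : 'M[R]_n) i : F \in unitmx -> row i F != 0.
Proof.
move=> Fu; apply/eqP => Fi0.
have /matrixP/(_ 0 i) : 'e_i = 0 :> 'rV[R]_n.
  by rewrite -[LHS](mulmxK Fu) -rowE Fi0 mul0mx.
by rewrite !mxE !eqxx => /eqP; rewrite oner_eq0.
Qed.

End UnitMatrices.

Lemma pos_def_unitmx (R : realFieldType) n (S : 'M[R]_n) :
  pos_def S -> S \in unitmx.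
Proof.
case=> _ Spos; rewrite -row_free_unit -kermx_eq0 -nz_row_eq0.
apply: contraT => x_neq0; have := Spos _ x_neq0.
have -> : nz_row (kermx S) *m S = 0 by apply/sub_kermxP; exact: nz_row_sub.
by rewrite !mul0mx mxE ltxx.
Qed.

Lemma pos_def_drsubmx (R : realFieldType) m n (S : 'M[R]_(m + n)) :
  pos_def S -> pos_def (drsubmx S).
Proof.
case=> Ssym Spos; split; first by rewrite trmx_drsub Ssym.
move=> x x_neq0; have := Spos (row_mx 0 x); rewrite row_mx_eq0 eqxx x_neq0.
rewrite -{1}[S]submxK mul_row_block tr_row_mx mul_row_col trmx0 !mul0mx !add0r.
by rewrite mulmx0 add0r => /(_ isT).
Qed.

Lemma sub_rV_deltaP (F : fieldType) k n (U : 'M[F]_(k, n)) (i : 'I_n) :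
  (('e_i : 'rV_n) <= U)%MS ->
  reflect (forall v : 'rV_n, (v <= U)%MS -> v 0 i = 0 -> v = 0)
          (U <= ('e_i : 'rV_n))%MS.
Proof.
move=> eU; apply: (iffP idP) => [Ue v vU vi | Uinj].
  have /sub_rVP[a va] := submx_trans vU Ue.
  by move: vi; rewrite va !mxE !eqxx mulr1 => ->; rewrite scale0r.
apply/row_subP => r; set u := row r U.
have uU : (u <= U)%MS := row_sub r U.
suff -> : u = u 0 i *: 'e_i by rewrite scalemx_sub.
apply/eqP; rewrite -subr_eq0; apply/eqP/Uinj.
  by rewrite addmx_sub // -scaleNr scalemx_sub.
by rewrite !mxE !eqxx mulr1 subrr.
Qed.

Lemma kermx_sub_deltaE (F : fieldType) m n (M : 'M[F]_(m, n)) (i : 'I_m) :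
  (('e_i : 'rV_m) <= kermx M)%MS ->
  (kermx M <= ('e_i : 'rV_m))%MS = (\rank M == (m - 1)%N).
Proof.
move=> eK; have [_ <-] := mxrank_leqif_sup eK.
have := mxrankS eK; rewrite mxrank_ker mxrank_delta => ker_gt0.
by have := rank_leq_row M; case: eqP; case: eqP; lia.
Qed.

Section Identification.
Variables (R : realFieldType) (G K p : nat).
Variables (A : 'M[R]_(G + K, p.+1 * (G + K))) (Sigma : 'M[R]_(G + K)).
Variables (Rdim : 'I_(G + K) -> nat)
          (Phi : forall h : 'I_(G + K), 'M[R]_(p.+1 * (G + K), Rdim h)).
Variable g : 'I_G.
Hypotheses (A0_unit : lag_mx A ord0 \in unitmx) (Sigma_pos : pos_def Sigma).
Hypotheses (A_block : block_restr A) (Sigma_block : cov_restr Sigma).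
Hypothesis A_eq : eq_restr Phi A.

Local Notation M := (usubmx A *m Phi (lshift K g)).

Lemma delta_sub_kermx : (('e_g : 'rV_G) <= kermx M)%MS.
Proof.
apply/sub_kermxP; rewrite mulmxA -rowE.
have -> : row g (usubmx A) = row (lshift K g) A by apply/matrixP => a b; rewrite !mxE.
exact: A_eq.
Qed.

Lemma admissible_dlsubmx F : admissible Phi A Sigma F -> dlsubmx F = 0.
Proof.
case=> _ /(_ ord0) FA_block _ _.
have L21 : dlsubmx (lag_mx A ord0) = 0 := A_block ord0.
have := A0_unit; rewrite unitmx_dlsubmx0 // => /andP[L11_unit _].
move: FA_block; rewrite lag_mx_mul dlsubmx_mul L21 mulmx0 addr0 => F21L11.
by rewrite -[dlsubmx F](mulmxK L11_unit) F21L11 mul0mx.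
Qed.

Lemma admissible_ursubmx F : admissible Phi A Sigma F -> ursubmx F = 0.
Proof.
move=> Fadm; have F21 := admissible_dlsubmx Fadm; case: Fadm => F_unit _ F_cov _.
have := F_unit; rewrite unitmx_dlsubmx0 // => /andP[_].
rewrite -unitmx_tr => F22t_unit.
have S22_unit := pos_def_unitmx (pos_def_drsubmx Sigma_pos).
move: F_cov; rewrite /cov_restr ursubmx_mul_tr // => F12S22F22t.
rewrite -[ursubmx F](mulmxK S22_unit) -[ursubmx F *m _](mulmxK F22t_unit).
by rewrite F12S22F22t !mul0mx.
Qed.

Lemma admissible_row F : admissible Phi A Sigma F ->
  exists2 f : 'rV_G, (f <= kermx M)%MS & row (lshift K g) F = row_mx f 0.
Proof.
move=> Fadm; have F12 := admissible_ursubmx Fadm.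
case: Fadm => _ _ _ /(_ (lshift K g)).
have rowF : row (lshift K g) F = row_mx (row g (ulsubmx F)) 0.
  by rewrite -row_usubmx -[usubmx F]hsubmxK row_row_mx -/(ursubmx F) F12 row0.
rewrite row_mul rowF -[A in row_mx _ 0 *m A]vsubmxK mul_row_col mul0mx addr0.
by rewrite -mulmxA => /sub_kermxP; exists (row g (ulsubmx F)).
Qed.

Definition shear_mx (v : 'rV[R]_G) : 'M[R]_(G + K) :=
  block_mx (1%:M + delta_mx g 0 *m v) 0 0 1%:M.

Lemma shear_mxE v j : j != g -> shear_mx v (lshift K g) (lshift K j) = v 0 j.
Proof.
move=> j_neq_g; rewrite block_mxEul !mxE big_ord1 !mxE eqxx eq_sym (negbTE j_neq_g).
by rewrite add0r mul1r.
Qed.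

Lemma shear_admissible v : (v <= kermx M)%MS -> v 0 g = 0 ->
  admissible Phi A Sigma (shear_mx v).
Proof.
move=> /sub_kermxP vM vg; rewrite /shear_mx; split.
- rewrite unitmx_dlsubmx0 ?block_mxKdl // block_mxKul block_mxKdr unitmx1 andbT.
  apply: unitmx_1_add; rewrite mulmxA -(mulmxA _ v) -colE.
  have -> : col g v = 0 by apply/matrixP => a b; rewrite !mxE (ord1 a).
  by rewrite mulmx0 mul0mx.
- move=> i; rewrite lag_mx_mul dlsubmx_mul block_mxKdl block_mxKdr A_block.
  by rewrite mul0mx mulmx0 addr0.
- by rewrite /cov_restr ursubmx_mul_tr ?block_mxKdl // block_mxKur !mul0mx.
move=> h; rewrite -[A]vsubmxK mul_block_col !mul0mx addr0 add0r mul1mx.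
case: (split_ordP h) => [i -> | k ->]; last by rewrite rowKd row_dsubmx A_eq.
rewrite rowKu mulmxDl mul1mx -mulmxA linearD /= row_mul mulmxDl.
rewrite row_usubmx A_eq add0r.
have [-> | i_neq_g] := eqVneq i g; first by rewrite -!mulmxA vM mulmx0.
have -> : row i (delta_mx g 0 : 'cV[R]_G) = 0.
  by apply/matrixP => a b; rewrite !mxE (negbTE i_neq_g).
by rewrite !mul0mx.
Qed.

Lemma identifiedE :
  identified Phi A Sigma (lshift K g) <-> (kermx M <= ('e_g : 'rV_G))%MS.
Proof.
split=> [Hid | kerM].
  apply/(sub_rV_deltaP delta_sub_kermx) => v vM vg.
  have [shear_row _] := Hid _ (shear_admissible vM vg).
  apply/rowP => j; rewrite mxE; have [-> // | j_neq_g] := eqVneq j g.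
  by rewrite -(shear_mxE v j_neq_g) shear_row // (inj_eq (@lshift_inj _ _)).
move=> F Fadm; have F_unit : F \in unitmx by case: Fadm.
have [f fM rowF] := admissible_row Fadm.
have /sub_rVP[a fa] := submx_trans fM kerM.
have Fg j : F (lshift K g) j = (row_mx (a *: 'e_g) 0 : 'rV_(G + K)) 0 j.
  by rewrite -fa -rowF mxE.
have Fgg : F (lshift K g) (lshift K g) = a by rewrite Fg row_mxEl !mxE !eqxx mulr1.
split=> [j | ].
  case: (split_ordP j) => [j' -> | k ->] j_neq_g;
    rewrite Fg ?row_mxEl ?row_mxEr !mxE //.
  rewrite (inj_eq (@lshift_inj _ _)) in j_neq_g.
  by rewrite (negbTE j_neq_g) andbF mulr0.
rewrite Fgg; apply: contra (unitmx_row_neq0 (lshift K g) F_unit) => /eqP a0.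
by rewrite rowF fa a0 scale0r row_mx0.
Qed.

End Identification.

Theorem corollary2p1 (R : realFieldType) (G K p : nat)
  (A : 'M[R]_(G + K, p.+1 * (G + K))) (Sigma : 'M[R]_(G + K))
  (Rdim : 'I_(G + K) -> nat)
  (Phi : forall h : 'I_(G + K), 'M[R]_(p.+1 * (G + K), Rdim h))
  (g : 'I_G) :
  lag_mx A ord0 \in unitmx ->
  pos_def Sigma ->
  block_restr A ->
  cov_restr Sigma ->
  eq_restr Phi A ->
  identified Phi A Sigma (lshift K g) <->
  \rank (usubmx A *m Phi (lshift K g)) = (G - 1)%N.
Proof.
move=> A0_unit Sigma_pos A_block Sigma_block A_eq.
rewrite identifiedE // kermx_sub_deltaE; last exact: delta_sub_kermx.
by split=> /eqP.
Qed.
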